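(* Let $D$ be an integer which is not a perfect square, let $A,B\in\mathbb{Z}$ be such that $S^{(D;A,B)}$ is smooth, and let $p\neq 2$ be a prime which is unramified in $\mathbb{Q}(\sqrt{D})/\mathbb{Q}$. Then there is a point $\mathbf{t}\in S^{(D;A,B)}(\mathbb{Q}_p)$ with $\mathrm{ev}_{\alpha,p}(\mathbf{t})=0$.
   Context: $S^{(D;A,B)}\subset\mathbb{P}^4_{\mathbb{Q}}$ is defined by $t_0t_1=t_2^2-Dt_3^2$ and $(t_0+At_1)(t_0+Bt_1)=t_2^2-Dt_4^2$; it is smooth iff $AB\neq0$, $A\neq B$, $A^2-2AB+B^2-2A-2B+1\neq 0$. For a smooth such surface, a place $l$ of $\mathbb{Q}$ and $\mathbf{t}\in S^{(D;A,B)}(\mathbb{Q}_l)$, at least one of the quotients $t_0/(t_0+At_1)$, $t_1/(t_0+At_1)$, $t_0/(t_0+Bt_1)$, $t_1/(t_0+Bt_1)$ is defined and nonzero at $\mathbf{t}$; for such a quotient $q$ one sets $\mathrm{ev}_{\alpha,l}(\mathbf{t})=0$ if the Hilbert symbol $(q,D)_l=1$ and $\mathrm{ev}_{\alpha,l}(\mathbf{t})=1/2$ if $(q,D)_l=-1$. This value is known to be independent of the choice of $q$ (it is the local evaluation of a Brauer class $\alpha\in\mathrm{Br}\,S^{(D;A,B)}$). *)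

(* Q_p is modelled concretely: Z_p = compatible sequences of
   integers (inverse limit of Z/p^k Z); points of P^4(Q_p) are represented by
   representatives in Z_p^5 (not all zero), as every point of P^4(Q_p) has one. *)
From mathcomp Require Import all_boot all_algebra.
Set Implicit Arguments. Unset Strict Implicit. Unset Printing Implicit Defensive.
Import GRing.Theory Num.Theory.
Local Open Scope ring_scope.

(* A sequence of integers x k, read as a residue mod p^k. *)
Definition zseq := nat -> int.

Definition is_zp (p : nat) (x : zseq) : Prop :=
  forall k : nat, (x k.+1 == x k %[mod (expn p k)%:Z])%Z.

Definition zp_eq (p : nat) (x y : zseq) : Prop :=
  forall k : nat, (x k == y k %[mod (expn p k)%:Z])%Z.

Definition zp_zero (p : nat) (x : zseq) : Prop := zp_eq p x (fun _ => 0).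

Definition zcst (c : int) : zseq := fun _ => c.
Definition zadd (x y : zseq) : zseq := fun k => x k + y k.
Definition zmul (x y : zseq) : zseq := fun k => x k * y k.

Definition on_S (p : nat) (D A B : int) (t0 t1 t2 t3 t4 : zseq) : Prop :=
  zp_eq p (fun k => t0 k * t1 k) (fun k => t2 k ^+ 2 - D * t3 k ^+ 2) /\
  zp_eq p (fun k => (t0 k + A * t1 k) * (t0 k + B * t1 k))
          (fun k => t2 k ^+ 2 - D * t4 k ^+ 2).

Definition S_point_Qp (p : nat) (D A B : int) (t0 t1 t2 t3 t4 : zseq) : Prop :=
  [/\ is_zp p t0, is_zp p t1, is_zp p t2, is_zp p t3 & is_zp p t4] /\
  ~ [/\ zp_zero p t0, zp_zero p t1, zp_zero p t2, zp_zero p t3 & zp_zero p t4] /\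
  on_S p D A B t0 t1 t2 t3 t4.

(* Hilbert symbol (f/g, b)_p = 1 for f, g, b in Z_p \ {0}: by definition,
   z^2 = (f/g) x^2 + b y^2 has a nontrivial solution in Q_p; after clearing the
   denominator g and scaling the solution into Z_p this reads
   g z^2 = f x^2 + g b y^2 with (x,y,z) in Z_p^3 not all zero. *)
Definition hilbert_quot_one (p : nat) (f g b : zseq) : Prop :=
  exists x y z : zseq,
    [/\ is_zp p x, is_zp p y & is_zp p z] /\
    ~ [/\ zp_zero p x, zp_zero p y & zp_zero p z] /\
    zp_eq p (fun k => g k * z k ^+ 2)
            (fun k => f k * x k ^+ 2 + g k * b k * y k ^+ 2).

(* ev_{alpha,p}(t) = 0: for one of the quotients q = f/g in
   t0/(t0+A t1), t1/(t0+A t1), t0/(t0+B t1), t1/(t0+B t1), which is defined and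
   nonzero at t (f(t) <> 0, g(t) <> 0), the Hilbert symbol (q, D)_p equals 1. *)
Definition ev_alpha_zero (p : nat) (D A B : int) (t0 t1 : zseq) : Prop :=
  let gA := zadd t0 (zmul (zcst A) t1) in
  let gB := zadd t0 (zmul (zcst B) t1) in
  exists f g : zseq,
    [\/ (f, g) = (t0, gA), (f, g) = (t1, gA), (f, g) = (t0, gB) | (f, g) = (t1, gB)] /\
    ~ zp_zero p f /\ ~ zp_zero p g /\ hilbert_quot_one p f g (zcst D).

Definition S_smooth (A B : int) : Prop :=
  [/\ A * B != 0, A != B & A ^+ 2 - 2 * A * B + B ^+ 2 - 2 * A - 2 * B + 1 != 0].

Definition is_square_int (D : int) : Prop := exists m : int, D = m ^+ 2.

(* squarefree part d of D (D = d m^2, d squarefree), so Q(sqrt D) = Q(sqrt d) *)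
Definition sqfree_part (D : int) : int :=
  Num.sg D * (\prod_(q <- primes `|D|%N | odd (logn q `|D|%N)) q)%N%:Z.

Definition quad_disc (D : int) : int :=
  let d := sqfree_part D in if (d %% 4)%Z == 1 then d else 4 * d.

(* p is unramified in Q(sqrt D)/Q iff p does not divide the discriminant *)
Definition unramified_QsqrtD (p : nat) (D : int) : Prop :=
  ~~ ((p%:Z) %| quad_disc D)%Z.

(* Write D = p^(2e) D' with D' a p-adic unit; this is possible because p is
   unramified.  If D is a square in Q_p, every Hilbert symbol (q, D)_p is 1; if
   -D is a square, the point (sqrt(-D) : 0 : 0 : 0 : 1) has t0/(t0 + A t1) = 1.
   Otherwise D' is neither a square nor minus a square mod p, so p > 3 and there
   is a c with c, c + A, c + B prime to p.  We look for a point with t0 = c t1: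
   then t1/(t0 + A t1) = 1/(c + A) is a unit, hence a norm z^2 - D' y^2 from the
   unramified extension, so its Hilbert symbol with D is 1.  Such a point comes
   from a solution of D' w^2 = (c + Q + D' a^2)^2 - 4 c Q, Q = (c + A)(c + B),
   with a a unit; a counting argument in F_p gives one mod p, and Hensel's lemma
   (as Newton's iteration on integers) lifts it to Z_p. *)

From mathcomp Require Import all_boot all_algebra.
From mathcomp Require Import ring zify.
Set Implicit Arguments. Unset Strict Implicit. Unset Printing Implicit Defensive.
Import GRing.Theory Num.Theory.
Local Open Scope ring_scope.

Lemma horner_taylor1 (R : comNzRingType) (f : {poly R}) (x h : R) :
  exists g, f.[x + h] = f.[x] + h * f^`().[x] + h ^+ 2 * g.
Proof.
elim/poly_ind: f => [|f c [g IHf]]; first by exists 0; rewrite deriv0 !horner0; ring.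
exists (f^`().[x] + g * (x + h)).
by rewrite derivMXaddC !(hornerMXaddC, hornerD, hornerM, hornerX) IHf; ring.
Qed.

Lemma dvdz_hornerB (f : {poly int}) (x y : int) : (x - y %| f.[x] - f.[y])%Z.
Proof.
have [g] := horner_taylor1 f y (x - y); rewrite addrC subrK => ->.
by apply/dvdzP; exists (f^`().[y] + (x - y) * g); ring.
Qed.

Section Newton.
Variables (p : nat) (f : {poly int}) (r v : int).
Hypotheses (root_r : (p %| f.[r])%Z) (inv_v : (p %| v * f^`().[r] - 1)%Z).

Definition newton_iter k := iter k (fun x => x - v * f.[x]) r.

Lemma newton_iter_spec k :
  (p %| newton_iter k - r)%Z && ((expn p k.+1)%:Z %| f.[newton_iter k])%Z.
Proof.
elim: k => [|k /andP [xr fx]]; first by rewrite /= subrr dvdz0 expn1.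
rewrite /newton_iter iterS -/(newton_iter k); set x := newton_iter k in xr fx *.
have p_fx : (p %| f.[x])%Z by apply: dvdz_trans fx; rewrite expnS PoszM dvdz_mulr.
have inv_vx : (p %| v * f^`().[x] - 1)%Z.
  rewrite (_ : _ - 1 = v * f^`().[r] - 1 + v * (f^`().[x] - f^`().[r])); last by ring.
  by rewrite rpredD // dvdz_mull // (dvdz_trans xr) ?dvdz_hornerB.
apply/andP; split.
  by rewrite (_ : _ - r = x - r - v * f.[x]); [rewrite rpredB ?dvdz_mull | ring].
have [g ->] := horner_taylor1 f x (- (v * f.[x])).
rewrite (_ : _ + _ = - f.[x] * (v * f^`().[x] - 1) + f.[x] * f.[x] * (v ^+ 2 * g)); last by ring.
apply: rpredD; first by rewrite expnSr PoszM mulNr rpredN dvdz_mul.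
apply: dvdz_mulr; apply: dvdz_trans (dvdz_mul fx fx).
by rewrite -PoszM -expnD dvdzE /= dvdn_exp2l //; lia.
Qed.

End Newton.

Lemma hensel (p : nat) (f : {poly int}) (r : int) : prime p ->
    (p %| f.[r])%Z -> ~~ (p %| f^`().[r])%Z ->
  exists s : zseq,
    [/\ is_zp p s, zp_zero p (fun k => f.[s k]) & forall k, (p %| s k - r)%Z].
Proof.
move=> p_prime root_r simple_r.
have /coprimezP [[u v] /= uv] : coprimez p f^`().[r].
  by rewrite coprimezE /= prime_coprime.
have inv_v : (p %| v * f^`().[r] - 1)%Z.
  by apply/dvdzP; exists (- u); rewrite -uv; ring.
have spec := newton_iter_spec root_r inv_v.
exists (newton_iter f r v); split=> k; have /andP [sr fs] := spec k => //.
- rewrite eqz_mod_dvd /newton_iter iterS -/(newton_iter f r v k).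
  rewrite (_ : _ - _ = - (v * f.[newton_iter f r v k])); last by ring.
  by rewrite rpredN dvdz_mull // (dvdz_trans _ fs) // expnS PoszM dvdz_mull.
- by rewrite eqz_mod_dvd subr0 (dvdz_trans _ fs) // expnS PoszM dvdz_mull.
Qed.

Section PadicSequences.
Variable p : nat.

Lemma zp_eq_ext (x y : zseq) : (forall k, x k = y k) -> zp_eq p x y.
Proof. by move=> e k; rewrite e. Qed.

Lemma zp_eq_lin (u v c x y : zseq) :
  zp_eq p u v -> (forall k, x k - y k = c k * (u k - v k)) -> zp_eq p x y.
Proof. by move=> uv e k; rewrite eqz_mod_dvd e dvdz_mull // -eqz_mod_dvd. Qed.

Lemma is_zp_cst (c : int) : is_zp p (zcst c).
Proof. by move=> k. Qed.

Lemma is_zp_add (x y : zseq) : is_zp p x -> is_zp p y -> is_zp p (zadd x y).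
Proof.
move=> zx zy k; rewrite eqz_mod_dvd /zadd.
rewrite (_ : _ - _ = (x k.+1 - x k) + (y k.+1 - y k)); last by ring.
by apply: rpredD; rewrite -eqz_mod_dvd.
Qed.

Lemma is_zp_mul (x y : zseq) : is_zp p x -> is_zp p y -> is_zp p (zmul x y).
Proof.
move=> zx zy k; rewrite eqz_mod_dvd /zmul.
rewrite (_ : _ - _ = x k.+1 * (y k.+1 - y k) + (x k.+1 - x k) * y k); last by ring.
by apply: rpredD; [apply: dvdz_mull | apply: dvdz_mulr]; rewrite -eqz_mod_dvd.
Qed.

Lemma zp_zero_cst (n : int) : prime p -> n != 0 -> ~ zp_zero p (zcst n).
Proof.
move=> p_prime n0 /(_ `|n|%N); rewrite eqz_mod_dvd subr0 dvdzE /= => /dvdn_leq.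
by rewrite absz_gt0 n0 leqNgt ltn_expl ?prime_gt1 // => /(_ isT).
Qed.

Lemma zp_zero_scaled (e : nat) (u x : zseq) : prime p ->
  (forall k, x k = (expn p e)%:Z * u k) -> (forall k, ~~ (p %| u k)%Z) -> ~ zp_zero p x.
Proof.
move=> p_prime ex u_unit /(_ e.+1); rewrite eqz_mod_dvd subr0 ex expnSr PoszM.
rewrite dvdz_mul2l ?(negbTE (u_unit _)) //.
by rewrite -[0]/(0%N%:Z) eqz_nat -lt0n expn_gt0 prime_gt0.
Qed.

End PadicSequences.

#[local] Hint Resolve is_zp_cst is_zp_add is_zp_mul : core.

Section FiberCounting.
Variables (T rT : finType) (g : T -> rT) (A : {set T}).

(* [tag] is injective on [A] when the fibres of [g] have at most two elements,
   and onto [setX (g @: A) setT] when every fibre has at least two. *)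
Let tag x := (g x, [pick y in A | g y == g x] == Some x).

Lemma card_le_double_imset (inv : T -> T) :
    {in A &, forall x y, g x = g y -> y = x \/ y = inv x} ->
  (#|A| <= 2 * #|g @: A|)%N.
Proof.
move=> fiber; have tag_inj : {in A &, injective tag}.
  move=> x y xA yA [gxy]; rewrite /tag -gxy.
  case: pickP => [z /andP [zA /eqP gz]|/(_ x)]; last by rewrite xA eqxx.
  rewrite !(inj_eq (@Some_inj _)).
  have [-> /esym/eqP //|zx] := eqVneq z x.
  move=> /esym/negbT zy.
  case: (fiber x z xA zA (esym gz)) => [/eqP|zinv]; first by rewrite (negbTE zx).
  case: (fiber x y xA yA gxy) => [-> //|yinv].
  by move: zy; rewrite zinv yinv eqxx.
rewrite -(card_in_imset tag_inj) mulnC -[2%N]card_bool -cardsT -cardsX.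
apply/subset_leq_card/subsetP => _ /imsetP [x xA ->].
by rewrite in_setX imset_f ?in_setT.
Qed.

Lemma double_card_imset_le (s : T -> T) :
    {in A, forall x, [/\ s x \in A, s x != x & g (s x) = g x]} ->
  (2 * #|g @: A| <= #|A|)%N.
Proof.
move=> pair; apply: leq_trans (leq_imset_card tag A).
rewrite mulnC -[2%N]card_bool -cardsT -cardsX.
apply/subset_leq_card/subsetP => -[_ b] /[!in_setX] /andP [/imsetP [x xA ->] _].
have [z [zA gz pick_z]] :
    exists z, [/\ z \in A, g z = g x & [pick y in A | g y == g x] = Some z].
  by case: pickP => [z /andP [zA /eqP gz] | /(_ x)]; [exists z | rewrite xA eqxx].
have [szA szz gsz] := pair z zA.
apply/imsetP; case: b; [exists z | exists (s z)]; rewrite // /tag ?gsz gz pick_z.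
  by rewrite eqxx.
by rewrite (inj_eq (@Some_inj _)) eq_sym (negbTE szz).
Qed.

End FiberCounting.

Lemma exists_notin3 (T : finType) (a b c : T) :
  (3 < #|T|)%N -> exists x, x \notin [set a; b; c].
Proof.
move=> T_gt3; have /subsetPn [x _ x_abc] : ~~ ([set: T] \subset [set a; b; c]).
  apply: contraTN T_gt3 => /subset_leq_card; rewrite cardsT -ltnNge ltnS => le.
  by apply: leq_trans le _; rewrite -setUA !cardsU1 cards1; case: (_ \notin _); case: (_ \notin _).
by exists x.
Qed.

Section FiniteFieldSquares.
Variable F : finFieldType.

Definition sqr_values (a b : F) (A : {set F}) : {set F} := [set a + b * x ^+ 2 | x in A].

Lemma sqr_values_fiber (a b : F) (A : {set F}) : b != 0 ->
  {in A &, forall x y, a + b * x ^+ 2 = a + b * y ^+ 2 -> y = x \/ y = - x}.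
Proof.
move=> b0 x y _ _ /addrI /(mulfI b0) /eqP; rewrite eqf_sqr.
by case/orP => /eqP ->; [left | right; rewrite opprK].
Qed.

Lemma card_sqr_values_nonzero (a b : F) : b != 0 ->
  (#|F| <= 2 * #|sqr_values a b [set~ 0%R]| + 1)%N.
Proof.
move=> b0; have := card_le_double_imset (sqr_values_fiber (a := a) (A := [set~ 0]) b0).
by rewrite cardsC1 -subn1 leq_subLR addnC.
Qed.

Lemma card_sqr_values (a b : F) : b != 0 ->
  (#|F| < 2 * #|sqr_values a b [set: F]|)%N.
Proof.
move=> b0; set X := sqr_values a b [set~ 0].
have aX : a \notin X.
  apply/imsetP => -[x /[!inE] x0 /eqP]; rewrite -{1}[a]addr0 (inj_eq (addrI a)).
  by rewrite eq_sym mulf_eq0 (negbTE b0) expf_eq0 (negbTE x0).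
have sub : a |: X \subset sqr_values a b [set: F].
  apply/subsetP => _ /setU1P [-> | /imsetP [x _ ->]]; apply/imsetP; last by exists x.
  by exists 0; rewrite ?in_setT // expr0n mulr0 addr0.
apply: leq_trans (leq_mul (leqnn 2) (subset_leq_card sub)).
by rewrite cardsU1 aX /X; have := card_sqr_values_nonzero a b0; lia.
Qed.

Lemma sqr_forms_meet (a b c d : F) : b != 0 -> d != 0 ->
  exists x y, a + b * x ^+ 2 = c + d * y ^+ 2.
Proof.
move=> b0 d0; have : (0 < #|sqr_values a b [set: F] :&: sqr_values c d [set: F]|)%N.
  have := card_sqr_values a b0; have := card_sqr_values c d0.
  have := subset_leq_card (subsetT (sqr_values a b [set: F] :|: sqr_values c d [set: F])).
  by rewrite cardsT cardsU; move: #|F| => q; lia.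
by case/card_gt0P => _ /setIP [/imsetP [x _ ->] /imsetP [y _ e]]; exists x, y.
Qed.

Lemma nonsquare_dichotomy (D y : F) : (forall x, x ^+ 2 != D) -> y != 0 ->
  (exists x, y = x ^+ 2) \/ (exists x, y = D * x ^+ 2).
Proof.
move=> nsqD y0; have D0 : D != 0 by apply: contraNneq (nsqD 0) => ->; rewrite expr0n.
set Q := sqr_values 0 1 [set~ 0]; set DQ := sqr_values 0 D [set~ 0].
have [/setUP [] /imsetP [x _ ->] | yQ] := boolP (y \in Q :|: DQ).
- by left; exists x; rewrite add0r mul1r.
- by right; exists x; rewrite add0r.
exfalso.
have QDQ0 : Q :&: DQ = set0.
  apply/setP => z; rewrite !inE; apply/negP.
  case/andP => /imsetP [x /[!inE] x0 ->] /imsetP [w /[!inE] w0]; rewrite !add0r mul1r => e.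
  by move: (nsqD (x / w)); rewrite expr_div_n e mulfK ?eqxx ?expf_neq0.
have sub : Q :|: DQ \subset ~: [set 0; y].
  apply/subsetP => z zQ; rewrite !inE negb_or; apply/andP; split; last first.
    by apply: contraNneq yQ => <-.
  by case/setUP: zQ => /imsetP [x /[!inE] x0 ->]; rewrite add0r ?mul1r ?mulf_neq0 ?expf_neq0.
have le_QDQ : (#|Q| + #|DQ| + 2 <= #|F|)%N.
  rewrite -(cardsC [set 0; y]) cards2 eq_sym y0 [X in (_ <= X)%N]addnC leq_add2r.
  by apply: leq_trans (subset_leq_card sub); rewrite cardsU QDQ0 cards0 subn0.
have le_Q : (#|F| <= 2 * #|Q| + 1)%N := card_sqr_values_nonzero 0 (oner_neq0 F).
have le_DQ : (#|F| <= 2 * #|DQ| + 1)%N := card_sqr_values_nonzero 0 D0.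
by lia.
Qed.

Section Hyperbola.
Variable m : F.
Hypotheses (two_neq0 : (2 : F) != 0) (m_neq0 : m != 0).

Definition hyperbola_abscissae : {set F} :=
  [set u | [exists v, (v != 0) && (u ^+ 2 - m == v ^+ 2)]].

Lemma card_hyperbola_abscissae :
  (2 * #|hyperbola_abscissae| + #|[set x | x ^+ 2 == m]| < #|F|)%N.
Proof.
(* u = g (u - v) whenever u^2 - m = v^2, and g is invariant under the
   fixed-point-free involution x |-> m / x of A. *)
pose A := ~: (0 |: [set x | x ^+ 2 == m]).
pose g x := (x + m / x) / 2.
have sub : hyperbola_abscissae \subset g @: A.
  apply/subsetP => u /[!inE] /existsP [v /andP [v0 /eqP uv]].
  have m_eq : m = (u - v) * (u + v) by rewrite -{1}(subKr (u ^+ 2) m) uv; ring.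
  have uv0 : u - v != 0 by apply: contraNneq m_neq0 => e; rewrite m_eq e mul0r.
  apply/imsetP; exists (u - v); last by rewrite /g m_eq; field; rewrite two_neq0 uv0.
  rewrite !inE negb_or uv0 /=; apply: contra v0 => /eqP sq.
  have /(mulfI uv0)/eqP : (u - v) * (u - v) = (u - v) * (u + v) by rewrite -expr2 sq m_eq.
  rewrite -subr_eq0 (_ : u - v - (u + v) = - (2 * v)); last by ring.
  by rewrite oppr_eq0 mulf_eq0 (negbTE two_neq0).
have half : (2 * #|g @: A| <= #|A|)%N.
  apply: (double_card_imset_le (s := fun x => m / x)) => x /[!inE] /norP [x0 xm].
  have mx0 : m / x != 0 by rewrite mulf_neq0 ?invr_neq0.
  have mx_sqr : (m / x == x) = (x ^+ 2 == m).
    by rewrite -(inj_eq (mulIf x0)) divfK // -expr2 eq_sym.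
  rewrite negb_or mx0 mx_sqr xm /g; split => //; last by field; rewrite ?two_neq0 ?x0 ?m_neq0.
  apply: contra xm => /eqP mxm; apply/eqP/(mulfI m_neq0).
  by rewrite -[X in X * x ^+ 2]mxm; field; rewrite ?x0.
have cardA : (#|A| + (1 + #|[set x | x ^+ 2 == m]|) = #|F|)%N.
  rewrite -(cardsC (0 |: [set x | x ^+ 2 == m])) cardsU1 inE expr0n eq_sym /= (negbTE m_neq0).
  by rewrite addnC.
have le_sub : (#|hyperbola_abscissae| <= #|g @: A|)%N := subset_leq_card sub.
by lia.
Qed.

(* The (|F| - 1)/2 values S + D a^2, a != 0, are too many to be abscissae other
   than S, or, if S^2 = m, abscissae at all. *)
Lemma sqr_values_not_sub_abscissae (D S : F) : D != 0 -> (exists z, S ^+ 2 - m = z ^+ 2) ->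
  ~~ (sqr_values S D [set~ 0] \subset hyperbola_abscissae).
Proof.
move=> D0 [z Sz]; apply/negP => X_sub; set X := sqr_values S D [set~ 0] in X_sub.
have SX : S \notin X.
  apply/imsetP => -[a /[!inE] a0 /eqP]; rewrite -{1}[S]addr0 (inj_eq (addrI S)) eq_sym.
  by rewrite mulf_eq0 (negbTE D0) expf_eq0 (negbTE a0).
have le_X : (#|F| <= 2 * #|X| + 1)%N := card_sqr_values_nonzero S D0.
have le_H : (2 * #|hyperbola_abscissae| + #|[set x | x ^+ 2 == m]| < #|F|)%N :=
  card_hyperbola_abscissae.
have [Sm | Sm] := eqVneq (S ^+ 2) m.
  have S0 : S != 0 by apply: contraNneq m_neq0 => S0; rewrite -Sm S0 expr0n.
  have SnS : S != - S by rewrite -subr_eq0 opprK -mulr2n -mulr_natl mulf_neq0.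
  have roots : [set S; - S] \subset [set x | x ^+ 2 == m].
    by apply/subsetP => x /set2P [] ->; rewrite inE ?sqrrN Sm.
  have le_roots : (2 <= #|[set x | x ^+ 2 == m]|)%N.
    by have := subset_leq_card roots; rewrite cards2 SnS.
  have le_XH : (#|X| <= #|hyperbola_abscissae|)%N := subset_leq_card X_sub.
  by lia.
have S_in : S \in hyperbola_abscissae.
  rewrite /hyperbola_abscissae inE; apply/existsP; exists z; rewrite Sz eqxx andbT.
  by apply: contraNneq Sm => z0; rewrite -subr_eq0 Sz z0 expr0n.
have lt_XH : (#|X| < #|hyperbola_abscissae|)%N.
  by apply: proper_card; apply/properP; split => //; exists S.
by lia.
Qed.

Lemma shift_into_nonsquare_class (D S : F) :
    (forall x, x ^+ 2 != D) -> (exists z, S ^+ 2 - m = z ^+ 2) ->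
  exists a w, a != 0 /\ (S + D * a ^+ 2) ^+ 2 - m = D * w ^+ 2.
Proof.
move=> nsqD Ssqr; have D0 : D != 0 by apply: contraNneq (nsqD 0) => ->; rewrite expr0n.
case: (boolP [exists a, [exists w, (a != 0) && ((S + D * a ^+ 2) ^+ 2 - m == D * w ^+ 2)]]).
  by case/existsP => a /existsP [w /andP [a0 /eqP e]]; exists a, w.
move=> none; exfalso; move/negP: (sqr_values_not_sub_abscissae D0 Ssqr); apply.
apply/subsetP => _ /imsetP [a /[!inE] a0 ->].
have notD w : (S + D * a ^+ 2) ^+ 2 - m != D * w ^+ 2.
  by apply: contra none => e; apply/existsP; exists a; apply/existsP; exists w; rewrite a0.
have n0 : (S + D * a ^+ 2) ^+ 2 - m != 0 by have := notD 0; rewrite expr0n mulr0.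
have [[v v_sqr] | [v v_D]] := nonsquare_dichotomy nsqD n0; last by case/eqP: (notD v).
apply/existsP; exists v; rewrite -v_sqr eqxx andbT; apply: contraNneq n0 => v0.
by rewrite v_sqr v0 expr0n.
Qed.

End Hyperbola.

Lemma card_gt3_of_nonsquares (y : F) : (2 : F) != 0 ->
  (forall x, x ^+ 2 != y) -> (forall x, x ^+ 2 != - y) -> (3 < #|F|)%N.
Proof.
move=> two0 nsq nsqN.
have y_notin : y \notin [set 0; 1; -1].
  rewrite !inE -orbA; apply/or3P => -[] /eqP y_eq.
  - by move: (nsq 0); rewrite y_eq expr0n eqxx.
  - by move: (nsq 1); rewrite y_eq expr1n eqxx.
  - by move: (nsqN 1); rewrite y_eq opprK expr1n eqxx.
have one_neq_m1 : (1 : F) != -1.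
  by rewrite -subr_eq0 opprK (_ : 1 + 1 = 2) //.
have sub : [set 0; 1; -1] \proper [set: F].
  by rewrite properT; apply: contraNneq y_notin => ->; rewrite in_setT.
have := proper_card sub; rewrite cardsT -setUA !cardsU1 cards1 !inE.
by rewrite eq_sym oner_eq0 eq_sym oppr_eq0 oner_eq0 one_neq_m1.
Qed.

End FiniteFieldSquares.



Lemma intrX (R : pzRingType) (z : int) n : (z ^+ n)%:~R = z%:~R ^+ n :> R.
Proof. exact: rmorphXn. Qed.

Section ModpLifts.
Variable p : nat.
Hypothesis p_prime : prime p.

Lemma intr_Fp_eq0 (z : int) : ((z%:~R : 'F_p) == 0) = (p %| z)%Z.
Proof. by rewrite (dvdz_pcharf (pchar_Fp p_prime)). Qed.

Lemma intr_Fp_surj (x : 'F_p) : exists z : int, z%:~R = x.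
Proof. by exists (val x)%:Z; rewrite -pmulrn natr_Zp. Qed.

Lemma Fp_two_neq0 : p != 2%N -> (2 : 'F_p) != 0.
Proof.
move=> p_neq2; rewrite -[2]/((2%:Z)%:~R) intr_Fp_eq0 dvdzE /=.
by apply: contra p_neq2 => /(dvdn_leq (isT : (0 < 2)%N)); have := prime_gt1 p_prime; lia.
Qed.

Hypothesis two_neq0 : (2 : 'F_p) != 0.

Lemma zp_sqrt_lift (a c : int) (x : 'F_p) :
    a%:~R * x ^+ 2 = c%:~R :> 'F_p -> c%:~R != 0 :> 'F_p ->
  exists s : zseq,
    [/\ is_zp p s, zp_eq p (fun k => a * s k ^+ 2) (zcst c) & forall k, ~~ (p %| s k)%Z].
Proof.
move=> ax2c c0; have [r rx] := intr_Fp_surj x.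
have a0 : a%:~R != 0 :> 'F_p by apply: contraNneq c0 => a0; rewrite -ax2c a0 mul0r.
have x0 : x != 0 by apply: contraNneq c0 => x0; rewrite -ax2c x0 expr0n mulr0.
pose f := a%:P * 'X^2 - c%:P.
have root_r : (p %| f.[r])%Z.
  by rewrite -intr_Fp_eq0 /f !hornerE /= intrB !intrM rx -mulrA -expr2 ax2c subrr.
have simple_r : ~~ (p %| f^`().[r])%Z.
  rewrite -intr_Fp_eq0 /f !derivE !hornerE /= intrM intrD rx mulf_neq0 //.
  by rewrite -mulr2n -mulr_natl mulf_neq0.
have [s [s_zp fs sr]] := hensel p_prime root_r simple_r.
exists s; split => // [|k].
  by apply: (zp_eq_lin (c := fun _ => 1) fs) => k; rewrite /f !hornerE /= /zcst; ring.
have nd_r : ~~ (p %| r)%Z by rewrite -intr_Fp_eq0 rx.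
by apply: contra nd_r => ps; rewrite -(subKr (s k) r) rpredB.
Qed.

Lemma zp_sqrt_of_unit_sqr (e : nat) (u c : int) (x : 'F_p) :
    c = (expn p e)%:Z ^+ 2 * u -> x ^+ 2 = u%:~R -> u%:~R != 0 :> 'F_p ->
  exists d : zseq, [/\ is_zp p d, zp_eq p (fun k => d k ^+ 2) (zcst c) & ~ zp_zero p d].
Proof.
move=> ->{c} xu u0; have [|s [zs su s_unit]] := zp_sqrt_lift (a := 1) (x := x) _ u0.
  by rewrite mul1r xu.
exists (zmul (zcst (expn p e)%:Z) s); split; first by auto.
  apply: (zp_eq_lin (c := fun _ => (expn p e)%:Z ^+ 2) su) => k; rewrite /zmul /zcst.
  by move: (expn p e) => pe; ring.
exact: (zp_zero_scaled (e := e) (u := s) p_prime _ s_unit).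
Qed.

Lemma zp_norm_form (D' u : int) : D'%:~R != 0 :> 'F_p -> u%:~R != 0 :> 'F_p ->
  exists z y : zseq,
    [/\ is_zp p z, is_zp p y & zp_eq p (fun k => z k ^+ 2 - D' * y k ^+ 2) (zcst u)].
Proof.
move=> D'0 u0; have [x [v]] := sqr_forms_meet 0 u%:~R (oner_neq0 'F_p) D'0.
rewrite add0r mul1r => xv; have [y0 yv] := intr_Fp_surj v.
have [x0 | x_neq0] := eqVneq x 0.
  have [||s [zs sD' _]] := zp_sqrt_lift (a := D') (c := - u) (x := v).
  - by apply/eqP; rewrite intrN -subr_eq0 opprK addrC -xv x0 expr0n.
  - by rewrite intrN oppr_eq0.
  exists (zcst 0), s; split; auto.
  by apply: (zp_eq_lin (c := fun _ => -1) sD') => k; rewrite /zcst; ring.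
have [||s [zs su _]] := zp_sqrt_lift (a := 1) (c := u + D' * y0 ^+ 2) (x := x).
- by rewrite mul1r intrD intrM intrX yv xv.
- by rewrite intrD intrM intrX yv -xv expf_neq0.
exists s, (zcst y0); split; auto.
by apply: (zp_eq_lin (c := fun _ => 1) su) => k; rewrite /zcst; ring.
Qed.

Lemma zp_quartic_lift (D' S m : int) (a w : 'F_p) :
    D'%:~R != 0 :> 'F_p -> m%:~R != 0 :> 'F_p -> a != 0 ->
    (S%:~R + D'%:~R * a ^+ 2) ^+ 2 - m%:~R = D'%:~R * w ^+ 2 ->
  exists al ws : zseq,
    [/\ is_zp p al, is_zp p ws,
        zp_eq p (fun k => D' * ws k ^+ 2) (fun k => (S + D' * al k ^+ 2) ^+ 2 - m)
      & forall k, ~~ (p %| al k)%Z].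
Proof.
move=> D'0 m0 a0 aw; have [r ra] := intr_Fp_surj a.
have r_unit : ~~ (p %| r)%Z by rewrite -intr_Fp_eq0 ra.
have [w0 | w_neq0] := eqVneq w 0; last first.
  have [||ws [zws wsD' _]] := zp_sqrt_lift (a := D') (x := w)
                                (c := (S + D' * r ^+ 2) ^+ 2 - m).
  - by rewrite -aw !(intrB, intrD, intrM, intrX) ra.
  - by rewrite !(intrB, intrD, intrM, intrX) ra aw mulf_neq0 ?expf_neq0.
  by exists (zcst r), ws; split; auto.
pose q := S%:P + D'%:P * 'X^2; pose f := q * q - m%:P.
have q_neq0 : S%:~R + D'%:~R * a ^+ 2 != 0.
  apply: contraNneq m0 => q0; move: aw; rewrite q0 w0 !expr2 !mul0r mulr0 sub0r.
  by move/eqP; rewrite oppr_eq0.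
have fr : (f.[r]%:~R : 'F_p) = (S%:~R + D'%:~R * a ^+ 2) ^+ 2 - m%:~R.
  by rewrite /f /q !hornerE /= !(intrB, intrD, intrM) ra; ring.
have f'r : (f^`().[r]%:~R : 'F_p) = 2 * (S%:~R + D'%:~R * a ^+ 2) * (2 * D'%:~R * a).
  by rewrite /f /q !derivE !hornerE /= !(intrB, intrD, intrM) ra; ring.
have root_r : (p %| f.[r])%Z by rewrite -intr_Fp_eq0 fr aw w0 expr2 !mulr0.
have simple_r : ~~ (p %| f^`().[r])%Z by rewrite -intr_Fp_eq0 f'r !mulf_neq0.
have [s [zs fs sr]] := hensel p_prime root_r simple_r.
exists s, (zcst 0); split; auto.
  by apply: (zp_eq_lin (c := fun _ => -1) fs) => k; rewrite /f /q /zcst !hornerE /=; ring.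
by move=> k; apply: contra r_unit => ps; rewrite -(subKr (s k) r) rpredB.
Qed.

End ModpLifts.

Section Hilbert.
Variables (p : nat) (f g b : zseq).
Hypothesis p_prime : prime p.

Lemma hilbert_quot_one_sqrt (d : zseq) :
  is_zp p d -> zp_eq p (fun k => d k ^+ 2) b -> hilbert_quot_one p f g b.
Proof.
move=> zd db; exists (zcst 0), (zcst 1), d; split; first by split; auto.
split; first by case=> _ /(zp_zero_cst p_prime (oner_neq0 _)).
by apply: (zp_eq_lin (c := g) db) => k; rewrite /zcst; ring.
Qed.

Lemma hilbert_quot_one_same : (forall k, g k = f k) -> hilbert_quot_one p f g b.
Proof.
move=> gf; exists (zcst 1), (zcst 0), (zcst 1); split; first by split; auto.
split; first by case=> /(zp_zero_cst p_prime (oner_neq0 _)).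
by apply: zp_eq_ext => k; rewrite /zcst gf; ring.
Qed.

Lemma hilbert_quot_one_norm (E u D' : int) (z y : zseq) :
    E * u != 0 -> (forall k, g k = u * f k) -> is_zp p z -> is_zp p y ->
    zp_eq p (fun k => z k ^+ 2 - D' * y k ^+ 2) (zcst u) ->
  hilbert_quot_one p f g (zcst (E ^+ 2 * D')).
Proof.
move=> Eu0 gf zz zy zyu; exists (zcst (E * u)), y, (zmul (zcst E) z).
split; first by split; auto.
split; first by case=> /(zp_zero_cst p_prime Eu0).
by apply: (zp_eq_lin (c := fun k => u * f k * E ^+ 2) zyu) => k; rewrite /zcst /zmul gf; ring.
Qed.

End Hilbert.

Definition ev0_Qp_point (p : nat) (D A B : int) : Prop :=
  exists t0 t1 t2 t3 t4 : zseq,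
    S_point_Qp p D A B t0 t1 t2 t3 t4 /\ ev_alpha_zero p D A B t0 t1.

Section Ev0Points.
Variables (p : nat) (D A B : int).
Hypothesis p_prime : prime p.

Lemma ev0_Qp_pointI (f t0 t1 t2 t3 t4 : zseq) :
    let gA := zadd t0 (zmul (zcst A) t1) in
    [/\ is_zp p t0, is_zp p t1, is_zp p t2, is_zp p t3 & is_zp p t4] ->
    on_S p D A B t0 t1 t2 t3 t4 -> f = t0 \/ f = t1 ->
    ~ zp_zero p f -> ~ zp_zero p gA -> hilbert_quot_one p f gA (zcst D) ->
  ev0_Qp_point p D A B.
Proof.
move=> gA zt onS ft f0 g0 hil; exists t0, t1, t2, t3, t4; split.
  by split=> //; split=> // -[? ? _ _ _]; case: ft f0 => ->.
by exists f, gA; split=> //; case: ft => ->; [constructor 1 | constructor 2].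
Qed.

Lemma ev0_Qp_point_sqrt (d : zseq) : D != 0 -> A != 0 ->
  is_zp p d -> zp_eq p (fun k => d k ^+ 2) (zcst D) -> ev0_Qp_point p D A B.
Proof.
(* X1^2 - X2^2 = 16 A B D *)
move=> D0 A0 zd dD; set X1 := 4 * A * B * D + 1; set X2 := 4 * A * B * D - 1.
apply: (@ev0_Qp_pointI (zcst (4 * D)) (zcst 0) (zcst (4 * D)) (zmul d (zcst X1))
                       (zcst X1) (zcst X2)).
- by split; auto.
- split.
    by apply: (zp_eq_lin (c := fun _ => - X1 ^+ 2) dD) => k; rewrite /zcst /zmul; ring.
  by apply: (zp_eq_lin (c := fun _ => - X1 ^+ 2) dD) => k; rewrite /zcst /zmul /X1 /X2; ring.
- by right.
- by apply: zp_zero_cst; rewrite // mulf_neq0.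
- by apply: (zp_zero_cst (n := 0 + A * (4 * D))); rewrite // add0r !mulf_neq0.
- exact: hilbert_quot_one_sqrt zd dD.
Qed.

Lemma ev0_Qp_point_sqrt_opp (d : zseq) :
  is_zp p d -> ~ zp_zero p d -> zp_eq p (fun k => d k ^+ 2) (zcst (- D)) ->
  ev0_Qp_point p D A B.
Proof.
move=> zd d0 dD.
apply: (@ev0_Qp_pointI d d (zcst 0) (zcst 0) (zcst 0) (zcst 1)).
- by split; auto.
- split; first by apply: zp_eq_ext => k; rewrite /zcst; ring.
  by apply: (zp_eq_lin (c := fun _ => 1) dD) => k; rewrite /zcst; ring.
- by left.
- exact: d0.
- by move=> dA0; apply: d0 => k; have := dA0 k; rewrite /zadd /zmul /zcst mulr0 addr0.
- by apply: hilbert_quot_one_same => // k; rewrite /zadd /zmul /zcst mulr0 addr0.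
Qed.

Lemma ev0_Qp_point_norm (e : nat) (D' c : int) (al w z y : zseq) :
    let Q := (c + A) * (c + B) in
    D = (expn p e)%:Z ^+ 2 * D' ->
    [/\ is_zp p al, is_zp p w, is_zp p z & is_zp p y] ->
    zp_eq p (fun k => D' * w k ^+ 2) (fun k => (c + Q + D' * al k ^+ 2) ^+ 2 - 4 * c * Q) ->
    zp_eq p (fun k => z k ^+ 2 - D' * y k ^+ 2) (zcst (c + A)) ->
    (forall k, ~~ (p %| 2 * D' * al k)%Z) -> ~~ (p %| c + A)%Z ->
  ev0_Qp_point p D A B.
Proof.
move=> Q eD [zal zw zz zy] H norm al_unit cA_unit; set E := (expn p e)%:Z in eD *.
pose t1 := zmul (zcst (E * 2 * D')) al.
have t1_0 : ~ zp_zero p t1.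
  apply: (zp_zero_scaled (e := e) (u := fun k => 2 * D' * al k) p_prime) => // k.
  by rewrite /t1 /zmul /zcst /E; move: (expn p e) => pe; ring.
have gA_0 : ~ zp_zero p (zadd (zmul (zcst c) t1) (zmul (zcst A) t1)).
  apply: (zp_zero_scaled (e := e) (u := fun k => 2 * D' * al k * (c + A)) p_prime).
    by move=> k; rewrite /t1 /zadd /zmul /zcst /E; move: (expn p e) => pe; ring.
  by move=> k; rewrite -intr_Fp_eq0 // intrM mulf_neq0 ?intr_Fp_eq0.
have E0 : E != 0 by rewrite -[0]/(0%N%:Z) eqz_nat -lt0n expn_gt0 prime_gt0.
(* With t0 = c t1, t1 = 2 E D' al, t3 = L - D' al^2 and t4 = L + D' al^2, both
   equations of S become multiples of the hypothesis on w. *)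
clearbody E; set L := c - Q.
pose t3 := zadd (zcst L) (zmul (zcst (- D')) (zmul al al)).
pose t4 := zadd (zcst L) (zmul (zcst D') (zmul al al)).
apply: (@ev0_Qp_pointI t1 (zmul (zcst c) t1) t1 (zmul (zcst (E * D')) w) t3 t4) => //.
- by split; rewrite /t1 /t3 /t4; auto.
- by split; apply: (zp_eq_lin (c := fun _ => - (E ^+ 2 * D')) H) => k;
    rewrite /t1 /t3 /t4 /zadd /zmul /zcst eD /L /Q; ring.
- by right.
- rewrite eD; apply: (hilbert_quot_one_norm (u := c + A) p_prime _ _ zz zy norm).
    by rewrite mulf_neq0 //; apply: contraNneq cA_unit => ->.
  by move=> k; rewrite /t1 /zadd /zmul /zcst; ring.
Qed.

End Ev0Points.

Lemma ev0_Qp_point_nonsquare (p e : nat) (D A B D' : int) : prime p -> p != 2%N ->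
    D = (expn p e)%:Z ^+ 2 * D' -> D'%:~R != 0 :> 'F_p ->
    (forall x : 'F_p, x ^+ 2 != D'%:~R) -> (forall x : 'F_p, x ^+ 2 != - D'%:~R) ->
  ev0_Qp_point p D A B.
Proof.
move=> p_prime p_neq2 eD D'0 nsq nsqN; have two0 := Fp_two_neq0 p_prime p_neq2.
have [y] := exists_notin3 0 (- A%:~R) (- B%:~R) (card_gt3_of_nonsquares two0 nsq nsqN).
rewrite !inE -!orbA !negb_or => /and3P [y0 yA yB]; have [c cy] := intr_Fp_surj y.
set Q := (c + A) * (c + B).
have cA0 : (c + A)%:~R != 0 :> 'F_p by rewrite intrD cy addr_eq0.
have cB0 : (c + B)%:~R != 0 :> 'F_p by rewrite intrD cy addr_eq0.
have m0 : (4 * c * Q)%:~R != 0 :> 'F_p.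
  by rewrite (_ : 4 = 2 * 2) // !intrM cy !mulf_neq0.
have [|a [w [a0 aw]]] := shift_into_nonsquare_class two0 m0 (S := (c + Q)%:~R) nsq.
  by exists (c - Q)%:~R; rewrite -!intrX -intrB; congr (_%:~R); ring.
have [al [ws [zal zws H al_unit]]] := zp_quartic_lift p_prime two0 D'0 m0 a0 aw.
have [z [y' [zz zy norm]]] := zp_norm_form p_prime two0 D'0 cA0.
apply: (ev0_Qp_point_norm p_prime eD _ H norm) => [|k|]; first by [].
  by rewrite -intr_Fp_eq0 // !intrM !mulf_neq0 // intr_Fp_eq0.
by rewrite -intr_Fp_eq0.
Qed.

Lemma unramified_decomp (p : nat) (D : int) : prime p -> D != 0 -> unramified_QsqrtD p D ->
  exists e D', D = (expn p e)%:Z ^+ 2 * D' /\ ~~ (p %| D')%Z.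
Proof.
move=> p_prime D0 unram; have D_gt0 : (0 < `|D|)%N by rewrite absz_gt0.
have [n' p_n' eDn] := pfactor_coprime p_prime D_gt0.
have even_log : ~~ odd (logn p `|D|).
  apply: contra unram => odd_log; rewrite /quad_disc.
  have p_primes : p \in primes `|D| by rewrite -logn_gt0; case: (logn p `|D|) odd_log.
  have p_sqfree : (p %| sqfree_part D)%Z.
    by apply: dvdz_mull; rewrite dvdzE /= (big_rem _ p_primes) odd_log dvdn_mulr.
  by case: ifP => _ //; apply: dvdz_mull.
set l := logn p `|D| in eDn even_log *.
exists l./2, (sgz D * n'%:Z); split.
  have pl : (expn p l)%:Z = (expn p l./2)%:Z ^+ 2.
    by rewrite -[in RHS]natz -natrX natz -expnM muln2 even_halfK.
  by rewrite {1}[D]intEsg eDn PoszM pl; ring.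
rewrite -intr_Fp_eq0 // intrM mulf_neq0 // intr_Fp_eq0 //.
  by rewrite dvdzE; case: (sgzP D) D0 => //= _ _; rewrite dvdn1 neq_ltn prime_gt1 ?orbT.
by rewrite dvdzE /= -prime_coprime // coprime_sym.
Qed.

Unset Implicit Arguments.

Theorem lemma3p1 (D A B : int) (p : nat) :
  ~ is_square_int D ->
  S_smooth A B ->
  prime p -> p != 2%N ->
  unramified_QsqrtD p D ->
  exists t0 t1 t2 t3 t4 : zseq,
    S_point_Qp p D A B t0 t1 t2 t3 t4 /\ ev_alpha_zero p D A B t0 t1.
Proof.
move=> nsqD [AB0 _ _] p_prime p_neq2 unram; change (ev0_Qp_point p D A B).
have D0 : D != 0 by apply/eqP => D0; apply: nsqD; exists 0; rewrite D0 expr0n.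
have A0 : A != 0 by apply: contraNneq AB0 => ->; rewrite mul0r.
have [e [D' [eD D'_unit]]] := unramified_decomp p_prime D0 unram.
have two0 := Fp_two_neq0 p_prime p_neq2.
have D'0 : D'%:~R != 0 :> 'F_p by rewrite intr_Fp_eq0.
have [/existsP [x /eqP xD'] | /existsPn nsq] := boolP [exists x : 'F_p, x ^+ 2 == D'%:~R].
  have [d [zd dD _]] := zp_sqrt_of_unit_sqr p_prime two0 eD xD' D'0.
  exact: (ev0_Qp_point_sqrt _ p_prime D0 A0 zd dD).
have [/existsP [x /eqP xD'] | /existsPn nsqN] := boolP [exists x : 'F_p, x ^+ 2 == - D'%:~R].
  have [|||d [zd dD d0]] :=
    zp_sqrt_of_unit_sqr (e := e) (u := - D') (c := - D) (x := x) p_prime two0.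
  - by rewrite eD mulrN.
  - by rewrite intrN.
  - by rewrite intrN oppr_eq0.
  exact: (ev0_Qp_point_sqrt_opp _ _ p_prime zd d0 dD).
by apply: ev0_Qp_point_nonsquare p_prime p_neq2 eD D'0 _ _ => x; [apply: nsq | apply: nsqN].
Qed.
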